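(* Consider the system of ordinary differential equations, for $t\ge 0$, \begin{align*} \dot S &= \Lambda + \omega m Q - \big[\lambda(t)(1-p) + \phi p + \mu\big] S,\\ \dot A &= \lambda(t)(1-p) S - (q\upsilon+\mu) A,\\ \dot I &= q\upsilon A - (\delta_1+\mu) I,\\ \dot Q &= \phi p S + \delta_1 f_1 I + \delta_2(1-f_2-f_3) H - (\omega m+\mu) Q,\\ \dot H &= \delta_1(1-f_1) I + \eta(1-\kappa) H_{IC} - \big[\delta_2(1-f_2-f_3) + \delta_2 f_2 + \alpha_1 f_3 + \mu\big] H,\\ \dot H_{IC} &= \delta_2 f_2 H - \big[\eta(1-\kappa) + \alpha_2\kappa + \mu\big] H_{IC}, \end{align*} where $N(t)=S+A+I+Q+H+H_{IC}$ and $\lambda(t)=\beta\,[A(t)+I(t)+l_H H(t)]/N(t)$. Set $a_0=q\upsilon+\mu$, $a_1=\delta_1+\mu$, $a_2=m\omega+\mu$, $a_3=\delta_2(1-f_2-f_3)+\delta_2 f_2+\alpha_1 f_3+\mu$, $a_6=\delta_1(1-f_1)$, $\eta_\kappa=\eta(1-\kappa)$, $a_7=\alpha_2\kappa+\eta_\kappa+\mu$, $\chi=a_3a_7-\delta_2\eta_\kappa f_2$, and define $$R_0=\frac{\beta\, a_2\,(1-p)\Big[\big(l_H\, a_6\, q\upsilon+(a_1+q\upsilon)a_3\big)a_7-\delta_2\,\eta_\kappa\, f_2\,(q\upsilon+a_1)\Big]}{a_0\,a_1\,\chi\,(p\phi+a_2)}.$$ If $R_0>1$, then the system has a unique endemic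 equilibrium, i.e., a unique equilibrium $(S^*,A^*,I^*,Q^*,H^*,H_{IC}^* )$ whose force of infection $\lambda^*=\beta(A^*+I^*+l_H H^* )(1-p)/N^*$, with $N^*=S^*+A^*+I^*+Q^*+H^*+H_{IC}^*$, is strictly positive.
   Context: This is a compartmental COVID-19 model (susceptible $S$, asymptomatic infected $A$, symptomatic infected $I$, quarantined $Q$, hospitalized $H$, hospitalized in intensive care $H_{IC}$). All parameters are non-negative: $\Lambda>0$, $\mu>0$, $\beta>0$, $l_H>0$, $\phi,\upsilon,\delta_1,\delta_2,\eta,\omega,\alpha_1,\alpha_2>0$, and $p,q,f_1,f_2,f_3,\kappa,m\in[0,1]$ with $1-f_2-f_3\in[0,1]$. The relative transmissibility of class $A$ is taken equal to $1$. $R_0$ is called the basic reproduction number; an endemic equilibrium is an equilibrium of the system with strictly positive force of infection $\lambda^*$ (and $\chi>0$). *)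

From Stdlib Require Import Reals Lra.
Open Scope R_scope.

Record params := mkParams {
  Lam : R; mu : R; beta : R; lH : R;
  phi : R; ups : R; delta1 : R; delta2 : R; eta : R; omega : R;
  alpha1 : R; alpha2 : R;
  p : R; q : R; f1 : R; f2 : R; f3 : R; kappa : R; m : R }.

Definition in01 (x : R) : Prop := 0 <= x <= 1.

Definition valid_params (P : params) : Prop :=
  0 < Lam P /\ 0 < mu P /\ 0 < beta P /\ 0 < lH P /\
  0 < phi P /\ 0 < ups P /\ 0 < delta1 P /\ 0 < delta2 P /\ 0 < eta P /\
  0 < omega P /\ 0 < alpha1 P /\ 0 < alpha2 P /\
  in01 (p P) /\ in01 (q P) /\ in01 (f1 P) /\ in01 (f2 P) /\ in01 (f3 P) /\
  in01 (kappa P) /\ in01 (m P) /\ in01 (1 - f2 P - f3 P).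

Record state := mkState { sS : R; sA : R; sI : R; sQ : R; sH : R; sHIC : R }.

Definition Ntot (x : state) : R := sS x + sA x + sI x + sQ x + sH x + sHIC x.

Definition lam (P : params) (x : state) : R :=
  beta P * (sA x + sI x + lH P * sH x) / Ntot x.

Definition rhs_S P x := Lam P + omega P * m P * sQ x
  - (lam P x * (1 - p P) + phi P * p P + mu P) * sS x.
Definition rhs_A P x := lam P x * (1 - p P) * sS x - (q P * ups P + mu P) * sA x.
Definition rhs_I P x := q P * ups P * sA x - (delta1 P + mu P) * sI x.
Definition rhs_Q P x := phi P * p P * sS x + delta1 P * f1 P * sI x
  + delta2 P * (1 - f2 P - f3 P) * sH x - (omega P * m P + mu P) * sQ x.
Definition rhs_H P x := delta1 P * (1 - f1 P) * sI x + eta P * (1 - kappa P) * sHIC x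
  - (delta2 P * (1 - f2 P - f3 P) + delta2 P * f2 P + alpha1 P * f3 P + mu P) * sH x.
Definition rhs_HIC P x := delta2 P * f2 P * sH x
  - (eta P * (1 - kappa P) + alpha2 P * kappa P + mu P) * sHIC x.

Definition equilibrium (P : params) (x : state) : Prop :=
  0 <= sS x /\ 0 <= sA x /\ 0 <= sI x /\ 0 <= sQ x /\ 0 <= sH x /\ 0 <= sHIC x /\
  0 < Ntot x /\
  rhs_S P x = 0 /\ rhs_A P x = 0 /\ rhs_I P x = 0 /\
  rhs_Q P x = 0 /\ rhs_H P x = 0 /\ rhs_HIC P x = 0.

Definition force_inf (P : params) (x : state) : R :=
  beta P * (sA x + sI x + lH P * sH x) * (1 - p P) / Ntot x.

Definition endemic_equilibrium (P : params) (x : state) : Prop :=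
  equilibrium P x /\ 0 < force_inf P x.

Definition a0 P := q P * ups P + mu P.
Definition a1 P := delta1 P + mu P.
Definition a2 P := m P * omega P + mu P.
Definition a3 P := delta2 P * (1 - f2 P - f3 P) + delta2 P * f2 P + alpha1 P * f3 P + mu P.
Definition a6 P := delta1 P * (1 - f1 P).
Definition eta_k P := eta P * (1 - kappa P).
Definition a7 P := alpha2 P * kappa P + eta_k P + mu P.
Definition chi P := a3 P * a7 P - delta2 P * eta_k P * f2 P.

Definition basicR0 (P : params) : R :=
  beta P * a2 P * (1 - p P) *
    ((lH P * a6 P * q P * ups P + (a1 P + q P * ups P) * a3 P) * a7 P
     - delta2 P * eta_k P * f2 P * (q P * ups P + a1 P))
  / (a0 P * a1 P * chi P * (p P * phi P + a2 P)).

From Stdlib Require Import Reals Lra Psatz.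
Open Scope R_scope.

(* At an equilibrium every compartment other than S is proportional to the
   incidence lambda S: the linear equations for A, I, H, H_IC and Q are solved in
   cascade, the hospital block through chi. Hence N = S (1 + phi p / a2 + W lambda)
   and the definition of the force of infection becomes the fixed-point equation
   lambda = beta (1-p) K lambda / (1 + phi p / a2 + W lambda), with K = inf_load and
   W = pop_load. Its only possible positive solution is
   lambda_star = (beta (1-p) K - 1 - phi p / a2) / W, which is positive exactly when
   R0 = beta (1-p) K / (1 + phi p / a2) exceeds 1. The S-equation then forces
   S = Lambda / S_outflow lambda_star, and S_outflow is positive because, by
   conservation of the total population, the net outflow of S balances the
   natural and disease-induced deaths. *)

(* [rate_XY P] is the per-capita transfer rate from compartment X to compartment Y. *)
Definition rate_AI P := q P * ups P.
Definition rate_SQ P := phi P * p P.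
Definition rate_QS P := omega P * m P.
Definition rate_IQ P := delta1 P * f1 P.
Definition rate_HQ P := delta2 P * (1 - f2 P - f3 P).
Definition rate_HHIC P := delta2 P * f2 P.

Lemma rhs_S_rates P x : rhs_S P x =
  Lam P + rate_QS P * sQ x - (force_inf P x + rate_SQ P + mu P) * sS x.
Proof. unfold rhs_S, force_inf, lam, rate_QS, rate_SQ, Rdiv. ring. Qed.

Lemma rhs_A_rates P x : rhs_A P x = force_inf P x * sS x - a0 P * sA x.
Proof. unfold rhs_A, force_inf, lam, a0, Rdiv. ring. Qed.

Lemma rhs_I_rates P x : rhs_I P x = rate_AI P * sA x - a1 P * sI x.
Proof. unfold rhs_I, rate_AI, a1. ring. Qed.

Lemma rhs_Q_rates P x : rhs_Q P x =
  rate_SQ P * sS x + rate_IQ P * sI x + rate_HQ P * sH x - a2 P * sQ x.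
Proof. unfold rhs_Q, rate_SQ, rate_IQ, rate_HQ, a2. ring. Qed.

Lemma rhs_H_rates P x : rhs_H P x = a6 P * sI x + eta_k P * sHIC x - a3 P * sH x.
Proof. unfold rhs_H, a6, eta_k, a3. ring. Qed.

Lemma rhs_HIC_rates P x : rhs_HIC P x = rate_HHIC P * sH x - a7 P * sHIC x.
Proof. unfold rhs_HIC, rate_HHIC, a7, eta_k. ring. Qed.

Lemma rhs_sum P x :
  rhs_S P x + rhs_A P x + rhs_I P x + rhs_Q P x + rhs_H P x + rhs_HIC P x =
  Lam P - mu P * Ntot x - alpha1 P * f3 P * sH x - alpha2 P * kappa P * sHIC x.
Proof. unfold rhs_S, rhs_A, rhs_I, rhs_Q, rhs_H, rhs_HIC, Ntot. ring. Qed.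

(* [coefX P] is the equilibrium size of X per unit of incidence lambda S
   (for Q, of its part driven by the incidence). *)
Definition coefA P := / a0 P.
Definition coefI P := rate_AI P * coefA P / a1 P.
Definition coefH P := a6 P * a7 P * coefI P / chi P.
Definition coefHIC P := rate_HHIC P * coefH P / a7 P.
Definition coefQ P := (rate_IQ P * coefI P + rate_HQ P * coefH P) / a2 P.

Definition eq_state P L S :=
  mkState S (coefA P * L * S) (coefI P * L * S)
    ((rate_SQ P / a2 P + coefQ P * L) * S) (coefH P * L * S) (coefHIC P * L * S).

Definition inf_load P := coefA P + coefI P + lH P * coefH P.
Definition pop_load P := coefA P + coefI P + coefQ P + coefH P + coefHIC P.

Definition S_outflow P L :=
  L + rate_SQ P + mu P - rate_QS P * (rate_SQ P / a2 P + coefQ P * L).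

Definition lambda_star P :=
  (beta P * (1 - p P) * inf_load P - (1 + rate_SQ P / a2 P)) / pop_load P.
Definition S_star P := Lam P / S_outflow P (lambda_star P).
Definition endemic_state P := eq_state P (lambda_star P) (S_star P).

Lemma Ntot_eq_state P L S :
  Ntot (eq_state P L S) = S * (1 + rate_SQ P / a2 P + L * pop_load P).
Proof. unfold Ntot, eq_state, pop_load; simpl. ring. Qed.

Lemma infectious_eq_state P L S :
  sA (eq_state P L S) + sI (eq_state P L S) + lH P * sH (eq_state P L S) =
  L * S * inf_load P.
Proof. unfold eq_state, inf_load; simpl. ring. Qed.

Lemma Rdiv_nonneg a b : 0 <= a -> 0 < b -> 0 <= a / b.
Proof. intros Ha Hb. apply Rmult_le_pos; [exact Ha | apply Rlt_le, Rinv_0_lt_compat, Hb]. Qed.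

Lemma homographic_fixed_point c d w x : 0 < w -> 0 < x -> 0 < d + x * w ->
  c * x / (d + x * w) = x <-> x = (c - d) / w.
Proof.
  intros Hw Hx Hd.
  assert (Hc : c * x / (d + x * w) = x <-> c = d + x * w).
  { split; intro E.
    - apply (Rmult_eq_reg_l x); [|lra]. rewrite <- E at 2. field. lra.
    - rewrite E. field. lra. }
  rewrite Hc. split; intro E.
  - rewrite E. field. lra.
  - rewrite E. field. lra.
Qed.

Section Equilibria.

Variable P : params.
Hypothesis HP : valid_params P.
Hypothesis Hchi : 0 < chi P.

Ltac unpack_params :=
  destruct HP as (HLam & Hmu & Hbeta & HlH & Hphi & Hups & Hd1 & Hd2 & Heta & Hom &
    Hal1 & Hal2 & [Hp0 Hp1] & [Hq0 Hq1] & [Hf10 Hf11] & [Hf20 Hf21] & [Hf30 Hf31] &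
    [Hk0 Hk1] & [Hm0 Hm1] & [Hf0 Hf1]).

Lemma a0_pos : 0 < a0 P.
Proof. unpack_params. unfold a0. nra. Qed.

Lemma a1_pos : 0 < a1 P.
Proof. unpack_params. unfold a1. lra. Qed.

Lemma a2_pos : 0 < a2 P.
Proof. unpack_params. unfold a2. nra. Qed.

Lemma a7_pos : 0 < a7 P.
Proof. unpack_params. unfold a7, eta_k. nra. Qed.

Ltac denominators_pos :=
  pose proof a0_pos; pose proof a1_pos; pose proof a2_pos; pose proof a7_pos.

Lemma coefA_pos : 0 < coefA P.
Proof. apply Rinv_0_lt_compat, a0_pos. Qed.

Lemma coefI_nonneg : 0 <= coefI P.
Proof.
  pose proof coefA_pos. apply Rdiv_nonneg; [|apply a1_pos].
  unpack_params. apply Rmult_le_pos; [unfold rate_AI; nra | lra].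
Qed.

Lemma coefH_nonneg : 0 <= coefH P.
Proof.
  pose proof coefI_nonneg; pose proof a7_pos. apply Rdiv_nonneg; [|exact Hchi].
  unpack_params. apply Rmult_le_pos; [apply Rmult_le_pos; [unfold a6|]; nra | lra].
Qed.

Lemma coefHIC_nonneg : 0 <= coefHIC P.
Proof.
  pose proof coefH_nonneg. apply Rdiv_nonneg; [|apply a7_pos].
  unpack_params. apply Rmult_le_pos; [unfold rate_HHIC; nra | lra].
Qed.

Lemma coefQ_nonneg : 0 <= coefQ P.
Proof.
  pose proof coefI_nonneg; pose proof coefH_nonneg. apply Rdiv_nonneg; [|apply a2_pos].
  unpack_params. unfold rate_IQ, rate_HQ.
  apply Rplus_le_le_0_compat; apply Rmult_le_pos; nra.
Qed.

Lemma rate_SQ_a2_nonneg : 0 <= rate_SQ P / a2 P.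
Proof. apply Rdiv_nonneg; [|apply a2_pos]. unpack_params. unfold rate_SQ. nra. Qed.

Lemma pop_load_pos : 0 < pop_load P.
Proof.
  pose proof coefA_pos; pose proof coefI_nonneg; pose proof coefQ_nonneg;
  pose proof coefH_nonneg; pose proof coefHIC_nonneg.
  unfold pop_load. lra.
Qed.

Lemma hospital_balance I H C : rate_HHIC P * H = a7 P * C ->
  a6 P * I + eta_k P * C - a3 P * H = 0 <-> chi P * H = a6 P * a7 P * I.
Proof.
  intro EC. pose proof a7_pos.
  assert (E : a7 P * (a6 P * I + eta_k P * C - a3 P * H) =
              a6 P * a7 P * I - chi P * H + eta_k P * (a7 P * C - rate_HHIC P * H))
    by (unfold chi, rate_HHIC; ring).
  rewrite EC in E. split; intro Eq.
  - rewrite Eq in E. lra.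
  - apply (Rmult_eq_reg_l (a7 P)); [|lra]. rewrite E, Eq. ring.
Qed.

Lemma eq_state_linear_rhs L S :
  rhs_I P (eq_state P L S) = 0 /\ rhs_Q P (eq_state P L S) = 0 /\
  rhs_H P (eq_state P L S) = 0 /\ rhs_HIC P (eq_state P L S) = 0.
Proof.
  denominators_pos.
  rewrite rhs_I_rates, rhs_Q_rates, rhs_H_rates, rhs_HIC_rates; unfold eq_state; simpl.
  assert (EC : rate_HHIC P * (coefH P * L * S) = a7 P * (coefHIC P * L * S))
    by (unfold coefHIC; field; lra).
  repeat split.
  - unfold coefI, coefA. field. lra.
  - unfold coefQ. field. lra.
  - apply (hospital_balance _ _ _ EC). unfold coefH. field. lra.
  - rewrite EC. ring.
Qed.

Lemma rhs_A_eq_state L S :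
  rhs_A P (eq_state P L S) = (force_inf P (eq_state P L S) - L) * S.
Proof.
  pose proof a0_pos. rewrite rhs_A_rates.
  set (F := force_inf P (eq_state P L S)). unfold eq_state, coefA; simpl.
  field. lra.
Qed.

Lemma rhs_SA_eq_state L S :
  rhs_S P (eq_state P L S) + rhs_A P (eq_state P L S) = Lam P - S * S_outflow P L.
Proof.
  pose proof a0_pos; pose proof a2_pos. rewrite rhs_S_rates, rhs_A_rates.
  unfold eq_state, S_outflow, coefA; simpl. field; split; lra.
Qed.

Lemma S_outflow_balance L :
  S_outflow P L = mu P * (1 + rate_SQ P / a2 P + L * pop_load P) +
    L * (alpha1 P * f3 P * coefH P + alpha2 P * kappa P * coefHIC P).
Proof.
  pose proof (rhs_sum P (eq_state P L 1)) as Hsum.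
  pose proof (rhs_SA_eq_state L 1) as HSA.
  destruct (eq_state_linear_rhs L 1) as (EI & EQ & EH & EC).
  rewrite Ntot_eq_state in Hsum.
  change (sH (eq_state P L 1)) with (coefH P * L * 1) in Hsum.
  change (sHIC (eq_state P L 1)) with (coefHIC P * L * 1) in Hsum.
  rewrite HSA, EI, EQ, EH, EC in Hsum. lra.
Qed.

Lemma S_outflow_pos L : 0 <= L -> 0 < S_outflow P L.
Proof.
  intro HL. rewrite S_outflow_balance.
  pose proof pop_load_pos; pose proof rate_SQ_a2_nonneg;
  pose proof coefH_nonneg; pose proof coefHIC_nonneg.
  unpack_params.
  assert (0 <= L * (alpha1 P * f3 P * coefH P + alpha2 P * kappa P * coefHIC P)).
  { apply Rmult_le_pos; [lra|]. apply Rplus_le_le_0_compat; apply Rmult_le_pos; nra. }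
  assert (0 <= L * pop_load P) by nra.
  nra.
Qed.

Lemma equilibrium_eq_state y :
  rhs_A P y = 0 -> rhs_I P y = 0 -> rhs_Q P y = 0 -> rhs_H P y = 0 -> rhs_HIC P y = 0 ->
  y = eq_state P (force_inf P y) (sS y).
Proof.
  rewrite rhs_A_rates, rhs_I_rates, rhs_Q_rates, rhs_H_rates, rhs_HIC_rates.
  set (L := force_inf P y); clearbody L.
  destruct y as [S A I Q H C]; simpl. intros EA EI EQ EH EC.
  denominators_pos.
  assert (eA : A = coefA P * L * S).
  { apply (Rmult_eq_reg_l (a0 P)); [|lra]. unfold coefA. field_simplify; lra. }
  assert (eI : I = coefI P * L * S).
  { apply (Rmult_eq_reg_l (a1 P)); [|lra].
    transitivity (rate_AI P * A); [lra|]. rewrite eA. unfold coefI. field. lra. }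
  assert (EHC : rate_HHIC P * H = a7 P * C) by lra.
  apply (hospital_balance _ _ _ EHC) in EH.
  assert (eH : H = coefH P * L * S).
  { apply (Rmult_eq_reg_l (chi P)); [|lra]. rewrite EH, eI. unfold coefH. field. lra. }
  assert (eC : C = coefHIC P * L * S).
  { apply (Rmult_eq_reg_l (a7 P)); [|lra]. rewrite <- EHC, eH. unfold coefHIC. field. lra. }
  assert (eQ : Q = (rate_SQ P / a2 P + coefQ P * L) * S).
  { apply (Rmult_eq_reg_l (a2 P)); [|lra].
    transitivity (rate_SQ P * S + rate_IQ P * I + rate_HQ P * H); [lra|].
    rewrite eI, eH. unfold coefQ. field. lra. }
  unfold eq_state. rewrite eA, eI, eQ, eH, eC. reflexivity.
Qed.

Lemma force_inf_eq_state L S : 0 < S -> 0 <= L ->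
  force_inf P (eq_state P L S) =
  beta P * (1 - p P) * inf_load P * L / (1 + rate_SQ P / a2 P + L * pop_load P).
Proof.
  intros HS HL. pose proof pop_load_pos; pose proof rate_SQ_a2_nonneg.
  unfold force_inf. rewrite infectious_eq_state, Ntot_eq_state.
  assert (HD : 0 < 1 + rate_SQ P / a2 P + L * pop_load P) by nra.
  revert HD. generalize (1 + rate_SQ P / a2 P + L * pop_load P). intros D HD.
  field. lra.
Qed.

Lemma force_inf_eq_state_fixed L S : 0 < S -> 0 < L ->
  force_inf P (eq_state P L S) = L <-> L = lambda_star P.
Proof.
  intros HS HL. rewrite force_inf_eq_state by lra.
  pose proof pop_load_pos; pose proof rate_SQ_a2_nonneg.
  assert (0 < 1 + rate_SQ P / a2 P + L * pop_load P) by nra.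
  apply homographic_fixed_point; lra.
Qed.

Lemma basicR0_eq :
  basicR0 P = beta P * (1 - p P) * inf_load P / (1 + rate_SQ P / a2 P).
Proof.
  denominators_pos. pose proof rate_SQ_a2_nonneg.
  assert (0 <= rate_SQ P) by (unpack_params; unfold rate_SQ; nra).
  unfold basicR0.
  replace ((lH P * a6 P * q P * ups P + (a1 P + q P * ups P) * a3 P) * a7 P
           - delta2 P * eta_k P * f2 P * (q P * ups P + a1 P))
    with ((a1 P + rate_AI P) * chi P + lH P * a6 P * a7 P * rate_AI P)
    by (unfold chi, rate_AI; ring).
  replace (p P * phi P) with (rate_SQ P) by (unfold rate_SQ; ring).
  unfold inf_load, coefH, coefI, coefA. field. repeat split; lra.
Qed.

Lemma lambda_star_pos : 1 < basicR0 P -> 0 < lambda_star P.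
Proof.
  rewrite basicR0_eq. intro HR0. pose proof pop_load_pos; pose proof rate_SQ_a2_nonneg.
  apply Rdiv_lt_0_compat; [|lra].
  assert (Hd : 0 < 1 + rate_SQ P / a2 P) by lra.
  revert HR0 Hd. generalize (beta P * (1 - p P) * inf_load P) (1 + rate_SQ P / a2 P).
  intros c d Hc Hd.
  apply (Rmult_lt_compat_r d) in Hc; [|lra].
  replace (c / d * d) with c in Hc by (field; lra).
  lra.
Qed.

Lemma equilibrium_S_pos y : equilibrium P y -> 0 < sS y.
Proof.
  intros (HS & _ & _ & HQ & _ & _ & _ & ES & _).
  assert (0 <= rate_QS P) by (unpack_params; unfold rate_QS; nra).
  assert (0 <= rate_QS P * sQ y) by (apply Rmult_le_pos; lra).
  rewrite rhs_S_rates in ES. destruct HS as [HS | HS]; [exact HS |].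
  rewrite <- HS in ES. unpack_params. lra.
Qed.

Lemma endemic_state_endemic : 1 < basicR0 P -> endemic_equilibrium P (endemic_state P).
Proof.
  intro HR0. unfold endemic_state, S_star.
  pose proof (lambda_star_pos HR0) as HL.
  set (L := lambda_star P) in *.
  pose proof (S_outflow_pos L (Rlt_le _ _ HL)) as HD.
  assert (HS : 0 < Lam P / S_outflow P L) by (unpack_params; apply Rdiv_lt_0_compat; lra).
  set (S := Lam P / S_outflow P L) in *.
  assert (HF : force_inf P (eq_state P L S) = L)
    by (apply (force_inf_eq_state_fixed L S); auto).
  destruct (eq_state_linear_rhs L S) as (EI & EQ & EH & EC).
  assert (EA : rhs_A P (eq_state P L S) = 0) by (rewrite rhs_A_eq_state, HF; ring).
  assert (ES : rhs_S P (eq_state P L S) = 0).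
  { pose proof (rhs_SA_eq_state L S) as HSA. rewrite EA, Rplus_0_r in HSA.
    rewrite HSA. unfold S. field. lra. }
  assert (Hc : forall c, 0 <= c -> 0 <= c * L * S)
    by (intros; apply Rmult_le_pos; [apply Rmult_le_pos|]; lra).
  pose proof coefA_pos; pose proof coefI_nonneg; pose proof coefQ_nonneg;
  pose proof coefH_nonneg; pose proof coefHIC_nonneg; pose proof rate_SQ_a2_nonneg;
  pose proof pop_load_pos.
  assert (HN : 0 < Ntot (eq_state P L S)).
  { rewrite Ntot_eq_state. apply Rmult_lt_0_compat; [lra|].
    assert (0 <= L * pop_load P) by (apply Rmult_le_pos; lra). lra. }
  split; [|rewrite HF; exact HL].
  repeat split; auto; unfold eq_state; simpl; try (apply Hc; lra).
  - lra.
  - apply Rmult_le_pos; [|lra]. apply Rplus_le_le_0_compat; [|apply Rmult_le_pos]; lra.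
Qed.

Lemma endemic_equilibrium_unique y :
  endemic_equilibrium P y -> y = endemic_state P.
Proof.
  intros [Heq HF]. pose proof (equilibrium_S_pos y Heq) as HS.
  destruct Heq as (_ & _ & _ & _ & _ & _ & _ & ES & EA & EI & EQ & EH & EC).
  pose proof (equilibrium_eq_state y EA EI EQ EH EC) as Ey.
  set (L := force_inf P y) in *. set (S := sS y) in *.
  assert (HL : L = lambda_star P).
  { apply (force_inf_eq_state_fixed L S HS HF). rewrite <- Ey. reflexivity. }
  pose proof (rhs_SA_eq_state L S) as HSA. rewrite <- Ey, ES, EA, HL in HSA.
  pose proof (S_outflow_pos (lambda_star P)) as HD.
  rewrite Ey, HL. unfold endemic_state, S_star. f_equal.
  rewrite HL in HF. specialize (HD (Rlt_le _ _ HF)).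
  apply (Rmult_eq_reg_r (S_outflow P (lambda_star P))); [|lra].
  field_simplify; lra.
Qed.

End Equilibria.

Theorem mainTheorem3 (P : params) :
  valid_params P -> 0 < chi P -> 1 < basicR0 P ->
  exists x : state, endemic_equilibrium P x /\
    forall y : state, endemic_equilibrium P y -> y = x.
Proof.
  intros HP Hchi HR0. exists (endemic_state P). split.
  - exact (endemic_state_endemic P HP Hchi HR0).
  - intros y Hy. exact (endemic_equilibrium_unique P HP Hchi y Hy).
Qed.
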